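(* Let $\alpha=1$, $j\ne0$, and $$G(x)=p_0+p_1\cos(2\pi x)+q_1\sin(2\pi x),\qquad V(x)=v_0+v_1\cos(2\pi x)+w_1\sin(2\pi x),$$ with real coefficients, $p_0>0$, $p_1\ge0$. Then there is a unique $r\ge1$ with $$\left(1-\frac1r\right)\left((p_1+j^2r)^2+q_1^2\right)=v_1^2+w_1^2.$$ Define $$a_0=2r-1,\quad \overline{H}=\frac{j^2(2r-1)}{2}+v_0-p_0,\quad a_1=-\frac{2r\big(v_1(p_1+j^2r)+w_1q_1\big)}{(p_1+j^2r)^2+q_1^2},\quad b_1=-\frac{2r\big(w_1(p_1+j^2r)-v_1q_1\big)}{(p_1+j^2r)^2+q_1^2}.$$ Then, with $m(x)=\dfrac{1}{a_0+a_1\cos(2\pi x)+b_1\sin(2\pi x)}$, the pair $(m,\overline{H})$ is the unique solution of problem (P) (with $\alpha=1$).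
   Context: $\mathbb{T}=\mathbb{R}/\mathbb{Z}$. Problem (P): given $0<\alpha\le2$, $j\ne0$, $V,G\in C^2(\mathbb{T})$, find $(m,\overline{H})\in C(\mathbb{T})\times\mathbb{R}$ with $m>0$ on $\mathbb{T}$, $\int_{\mathbb{T}}m=1$, and $\frac{j^2}{2m(x)^\alpha}+V(x)=\int_{\mathbb{T}}G(x-y)m(y)\,dy+\overline{H}$ for all $x\in\mathbb{T}$. *)

From Stdlib Require Import Reals.
Open Scope R_scope.

(* A function on the torus T = R/Z, represented as a 1-periodic function R -> R. *)
Definition periodic1 (f : R -> R) : Prop := forall x, f (x + 1) = f x.

Definition cont_torus (f : R -> R) : Prop := continuity f /\ periodic1 f.

(* "int_T f = I": the Riemann integral of f over [0,1] exists and equals I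
   (RiemannInt is independent of the integrability proof). *)
Definition int_T_eq (f : R -> R) (I : R) : Prop :=
  exists pr : Riemann_integrable f 0 1, RiemannInt pr = I.

Definition solves_P (alpha j : R) (V G : R -> R) (m : R -> R) (Hbar : R) : Prop :=
  cont_torus m /\
  (forall x, 0 < m x) /\
  int_T_eq m 1 /\
  (forall x, int_T_eq (fun y => G (x - y) * m y)
                      (j ^ 2 / (2 * Rpower (m x) alpha) + V x - Hbar)).

From Stdlib Require Import Reals Lra Psatz.
From Coquelicot Require Import Coquelicot.
Open Scope R_scope.

(** For alpha = 1 and G a first-order trigonometric polynomial, the convolution G * m only sees
    the mass and the first Fourier moments (C, S) of m, so the equation says that 1/m is itself a
    first-order trigonometric polynomial.  Hence m is a multiple of a Poisson kernel, whose mass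
    is 1 and whose moments are its parameters (u, v); matching coefficients turns (P) into a
    scalar equation for r = 1 / (1 - u^2 - v^2), whose left-hand side is strictly increasing in
    r >= 1, so it is solved by the intermediate value theorem.  For uniqueness, the equations of
    two solutions m, m' differ by a trigonometric polynomial; integrating it against m' - m gives
    int (m' - m)^2 / (m m') <= 0 because p1 >= 0, and Cauchy-Schwarz then forces the moments,
    the constants Hbar and finally 1/m and 1/m' to agree. *)

Definition trigpoly (a0 a b x : R) : R :=
  a0 + a * cos (2 * PI * x) + b * sin (2 * PI * x).

(* The Poisson kernel (1 - |w|^2) / |e^(2 pi i x) - w|^2 of the unit disc at w = u + i v. *)
Definition poisson (u v x : R) : R :=
  (1 - (u ^ 2 + v ^ 2)) / trigpoly (1 + (u ^ 2 + v ^ 2)) (-2 * u) (-2 * v) x.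

Lemma is_RInt_Rplus (f g : R -> R) (a b A B : R) :
  is_RInt f a b A -> is_RInt g a b B -> is_RInt (fun x => f x + g x) a b (A + B).
Proof. intros; now apply (is_RInt_plus f g). Qed.

Lemma is_RInt_Rminus (f g : R -> R) (a b A B : R) :
  is_RInt f a b A -> is_RInt g a b B -> is_RInt (fun x => f x - g x) a b (A - B).
Proof. intros; now apply (is_RInt_minus f g). Qed.

Lemma is_RInt_Rscal (k : R) (f : R -> R) (a b A : R) :
  is_RInt f a b A -> is_RInt (fun x => k * f x) a b (k * A).
Proof. intros; now apply (is_RInt_scal f). Qed.

Lemma is_RInt_lincomb3 (f g h : R -> R) (a b A B C k l n : R) :
  is_RInt f a b A -> is_RInt g a b B -> is_RInt h a b C ->
  is_RInt (fun x => k * f x + l * g x + n * h x) a b (k * A + l * B + n * C).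
Proof. intros; apply is_RInt_Rplus; [apply is_RInt_Rplus|]; now apply is_RInt_Rscal. Qed.

Lemma is_RInt_congr (f g : R -> R) (a b A B : R) :
  (forall x, f x = g x) -> A = B -> is_RInt f a b A -> is_RInt g a b B.
Proof. intros Hfg <- Hf; apply (is_RInt_ext f); auto. Qed.

Lemma is_RInt_R_unique (f : R -> R) (a b A B : R) :
  is_RInt f a b A -> is_RInt f a b B -> A = B.
Proof.
  intros HA HB.
  now rewrite <- (is_RInt_unique (V := R_CompleteNormedModule) f a b A HA),
              <- (is_RInt_unique (V := R_CompleteNormedModule) f a b B HB).
Qed.

Lemma ex_RInt_R_continuous (f : R -> R) (a b : R) :
  (forall x, continuous f x) -> ex_RInt f a b.
Proof. intros; apply (ex_RInt_continuous (V := R_CompleteNormedModule)); auto. Qed.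

Lemma is_RInt_antiderivative (F f : R -> R) (a b : R) :
  (forall x, is_derive F x (f x)) -> (forall x, continuous f x) ->
  is_RInt f a b (F b - F a).
Proof. intros; apply (is_RInt_derive (V := R_CompleteNormedModule)); auto. Qed.

Lemma continuous_Rmult (f g : R -> R) (x : R) :
  continuous f x -> continuous g x -> continuous (fun y => f y * g y) x.
Proof. intros; now apply (continuous_mult f g). Qed.

Lemma int_T_eqE (f : R -> R) (I : R) : int_T_eq f I <-> is_RInt f 0 1 I.
Proof.
  split.
  - intros [pr <-]; rewrite <- RInt_Reals.
    apply (RInt_correct (V := R_CompleteNormedModule)), ex_RInt_Reals_1; auto.
  - intros HI.
    exists (ex_RInt_Reals_0 f 0 1 (ex_intro _ I HI)); rewrite <- RInt_Reals.
    now apply (is_RInt_unique (V := R_CompleteNormedModule)).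
Qed.

Lemma is_RInt_ge0_le0_eq0 (f : R -> R) (a b A : R) :
  a <= b -> (forall x, 0 <= f x) -> is_RInt f a b A -> A <= 0 -> is_RInt f a b 0.
Proof.
  intros Hab Hf HA HA0.
  replace 0 with A; auto.
  pose proof (is_RInt_ge_0 f a b A Hab HA (fun x _ => Hf x)); lra.
Qed.

(* Cauchy-Schwarz: 0 <= int (l d + phi w)^2 / w = 2 l int phi d + int phi^2 w for every l. *)
Lemma energy0_orthogonal (d w phi : R -> R) (a b T B : R) :
  a <= b -> (forall x, 0 < w x) ->
  is_RInt (fun x => d x ^ 2 / w x) a b 0 ->
  is_RInt (fun x => phi x * d x) a b T ->
  is_RInt (fun x => phi x ^ 2 * w x) a b B -> T = 0.
Proof.
  intros Hab Hw HE HT HB.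
  assert (Hsq : forall l, 0 <= 2 * l * T + B).
  { intros l.
    apply (is_RInt_ge_0 (fun x => (l * d x + phi x * w x) ^ 2 / w x) a b); auto.
    - refine (is_RInt_congr _ _ _ _ _ _ _ _
                (is_RInt_lincomb3 _ _ _ _ _ _ _ _ (l * l) (2 * l) 1 HE HT HB)).
      + intros x; cbv beta; specialize (Hw x); field; lra.
      + ring.
    - intros x _; specialize (Hw x).
      apply Rmult_le_pos; [apply pow2_ge_0 | left; now apply Rinv_0_lt_compat]. }
  destruct (Req_dec T 0) as [|HT0]; auto.
  specialize (Hsq (- (B + 1) / (2 * T))).
  replace (2 * (- (B + 1) / (2 * T)) * T + B) with (-1) in Hsq by (field; auto).
  lra.
Qed.

Lemma is_RInt_scal_pos_eq0 (c : R) (w : R -> R) (a b : R) :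
  a < b -> (forall x, 0 < w x) -> (forall x, continuous w x) ->
  is_RInt (fun x => c * w x) a b 0 -> c = 0.
Proof.
  intros Hab Hw Hcw Hc.
  destruct (ex_RInt_R_continuous w a b Hcw) as [W HW].
  assert (HW0 : 0 < W).
  { rewrite <- (is_RInt_unique (V := R_CompleteNormedModule) _ _ _ _ HW).
    apply RInt_gt_0; auto. }
  assert (HcW : c * W = 0) by exact (is_RInt_R_unique _ _ _ _ _ (is_RInt_Rscal c _ _ _ _ HW) Hc).
  apply Rmult_integral in HcW; destruct HcW; lra.
Qed.

Lemma continuous_cos2PI (x : R) : continuous (fun y => cos (2 * PI * y)) x.
Proof. apply (ex_derive_continuous (K := R_AbsRing) (V := R_NormedModule)); auto_derive; auto. Qed.

Lemma continuous_sin2PI (x : R) : continuous (fun y => sin (2 * PI * y)) x.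
Proof. apply (ex_derive_continuous (K := R_AbsRing) (V := R_NormedModule)); auto_derive; auto. Qed.

Lemma trigpoly_periodic (a0 a b x : R) : trigpoly a0 a b (x + 1) = trigpoly a0 a b x.
Proof.
  unfold trigpoly; replace (2 * PI * (x + 1)) with (2 * PI * x + 2 * PI) by ring.
  rewrite cos_plus, sin_plus, cos_2PI, sin_2PI; ring.
Qed.

Lemma trigpoly_scale (k a0 a b x : R) :
  trigpoly (k * a0) (k * a) (k * b) x = k * trigpoly a0 a b x.
Proof. unfold trigpoly; ring. Qed.

Lemma trigpoly_0 (a0 a b : R) : trigpoly a0 a b 0 = a0 + a.
Proof. unfold trigpoly; rewrite Rmult_0_r, cos_0, sin_0; ring. Qed.

Lemma trigpoly_1 (a0 a b : R) : trigpoly a0 a b 1 = a0 + a.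
Proof. rewrite <- (Rplus_0_l 1), trigpoly_periodic; apply trigpoly_0. Qed.

Lemma is_RInt_cos2PI : is_RInt (fun x => cos (2 * PI * x)) 0 1 0.
Proof.
  pose proof PI_neq0.
  refine (is_RInt_congr _ _ _ _ _ _ _ _
            (is_RInt_antiderivative (fun x => sin (2 * PI * x) / (2 * PI)) _ 0 1 _
               continuous_cos2PI)).
  - reflexivity.
  - rewrite Rmult_1_r, Rmult_0_r, sin_2PI, sin_0; field; auto.
  - intros x; auto_derive; auto; field; auto.
Qed.

Lemma is_RInt_sin2PI : is_RInt (fun x => sin (2 * PI * x)) 0 1 0.
Proof.
  pose proof PI_neq0.
  refine (is_RInt_congr _ _ _ _ _ _ _ _
            (is_RInt_antiderivative (fun x => - cos (2 * PI * x) / (2 * PI)) _ 0 1 _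
               continuous_sin2PI)).
  - reflexivity.
  - rewrite Rmult_1_r, Rmult_0_r, cos_2PI, cos_0; field; auto.
  - intros x; auto_derive; auto; field; auto.
Qed.

Lemma is_RInt_trigpoly_conv (p0 p1 q1 x I C S : R) (m : R -> R) :
  is_RInt m 0 1 I ->
  is_RInt (fun y => cos (2 * PI * y) * m y) 0 1 C ->
  is_RInt (fun y => sin (2 * PI * y) * m y) 0 1 S ->
  is_RInt (fun y => trigpoly p0 p1 q1 (x - y) * m y) 0 1
    (trigpoly (p0 * I) (p1 * C - q1 * S) (q1 * C + p1 * S) x).
Proof.
  intros HI HC HS.
  refine (is_RInt_congr _ _ _ _ _ _ _ _
            (is_RInt_lincomb3 _ _ _ _ _ _ _ _ p0
               (p1 * cos (2 * PI * x) + q1 * sin (2 * PI * x))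
               (p1 * sin (2 * PI * x) - q1 * cos (2 * PI * x)) HI HC HS)).
  - intros y; unfold trigpoly.
    replace (2 * PI * (x - y)) with (2 * PI * x - 2 * PI * y) by ring.
    rewrite cos_minus, sin_minus; ring.
  - unfold trigpoly; ring.
Qed.

Lemma dot_cos_sin_sq_add (u v t : R) :
  (u * cos t + v * sin t) ^ 2 + (u * sin t - v * cos t) ^ 2 = u ^ 2 + v ^ 2.
Proof.
  pose proof (sin2_cos2 t) as Hcs; unfold Rsqr in Hcs.
  transitivity ((u ^ 2 + v ^ 2) * (sin t * sin t + cos t * cos t)); [ring | rewrite Hcs; ring].
Qed.

Lemma dot_cos_sin_sq_le (u v t : R) : (u * cos t + v * sin t) ^ 2 <= u ^ 2 + v ^ 2.
Proof.
  rewrite <- (dot_cos_sin_sq_add u v t).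
  pose proof (pow2_ge_0 (u * sin t - v * cos t)); lra.
Qed.

Lemma dot_cos_sin_lt_1 (u v t : R) : u ^ 2 + v ^ 2 < 1 -> u * cos t + v * sin t < 1.
Proof. intros He; pose proof (dot_cos_sin_sq_le u v t); nra. Qed.

Lemma poisson_denom_pos (u v x : R) :
  u ^ 2 + v ^ 2 < 1 -> 0 < trigpoly (1 + (u ^ 2 + v ^ 2)) (-2 * u) (-2 * v) x.
Proof.
  intros He; unfold trigpoly.
  pose proof (dot_cos_sin_sq_le u v (2 * PI * x)).
  pose proof (dot_cos_sin_lt_1 u v (2 * PI * x) He); nra.
Qed.

Lemma continuous_poisson (u v x : R) : u ^ 2 + v ^ 2 < 1 -> continuous (poisson u v) x.
Proof.
  intros He; pose proof (poisson_denom_pos u v x He); unfold poisson, trigpoly in *.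
  apply (ex_derive_continuous (K := R_AbsRing) (V := R_NormedModule)); auto_derive; lra.
Qed.

Lemma is_RInt_poisson (u v : R) : u ^ 2 + v ^ 2 < 1 -> is_RInt (poisson u v) 0 1 1.
Proof.
  intros He.
  set (F := fun x => x + / PI * atan ((u * sin (2 * PI * x) - v * cos (2 * PI * x))
                                      / (1 - u * cos (2 * PI * x) - v * sin (2 * PI * x)))).
  refine (is_RInt_congr _ _ _ _ _ _ _ _
            (is_RInt_antiderivative F _ 0 1 _ (fun x => continuous_poisson u v x He))).
  - reflexivity.
  - unfold F; rewrite Rmult_1_r, Rmult_0_r, cos_2PI, sin_2PI, cos_0, sin_0; field.
    apply PI_neq0.
  - intros x.
    pose proof (dot_cos_sin_lt_1 u v (2 * PI * x) He).
    pose proof (poisson_denom_pos u v x He).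
    pose proof PI_neq0.
    unfold F, poisson, trigpoly in *; auto_derive; [lra |].
    rewrite <- (dot_cos_sin_sq_add u v (2 * PI * x)) in *.
    field; repeat split; lra.
Qed.

Lemma is_RInt_poisson_cross (u v : R) : u ^ 2 + v ^ 2 < 1 ->
  is_RInt (fun x => (u * sin (2 * PI * x) - v * cos (2 * PI * x)) * poisson u v x) 0 1 0.
Proof.
  intros He.
  set (F := fun x => (1 - (u ^ 2 + v ^ 2)) / (4 * PI)
                     * ln (trigpoly (1 + (u ^ 2 + v ^ 2)) (-2 * u) (-2 * v) x)).
  refine (is_RInt_congr _ _ _ _ _ _ _ _ (is_RInt_antiderivative F _ 0 1 _ _)).
  - reflexivity.
  - unfold F; rewrite trigpoly_0, trigpoly_1; ring.
  - intros x; pose proof (poisson_denom_pos u v x He); pose proof PI_neq0.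
    unfold F, poisson, trigpoly in *; auto_derive; [lra | field; lra].
  - intros x; apply continuous_Rmult; [| now apply continuous_poisson].
    apply (ex_derive_continuous (K := R_AbsRing) (V := R_NormedModule)); auto_derive; auto.
Qed.

Lemma poisson_00 (x : R) : poisson 0 0 x = 1.
Proof. unfold poisson, trigpoly; field; ring_simplify; lra. Qed.

(* The linear relations u C + v S = u^2 + v^2 and u S - v C = 0 determine (C, S) = (u, v)
   unless u = v = 0, where the kernel is constant. *)
Lemma is_RInt_poisson_moments (u v : R) : u ^ 2 + v ^ 2 < 1 ->
  is_RInt (fun x => cos (2 * PI * x) * poisson u v x) 0 1 u /\
  is_RInt (fun x => sin (2 * PI * x) * poisson u v x) 0 1 v.
Proof.
  intros He.
  destruct (ex_RInt_R_continuous (fun x => cos (2 * PI * x) * poisson u v x) 0 1) as [C HC].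
  { intros x; apply continuous_Rmult; [apply continuous_cos2PI | now apply continuous_poisson]. }
  destruct (ex_RInt_R_continuous (fun x => sin (2 * PI * x) * poisson u v x) 0 1) as [S HS].
  { intros x; apply continuous_Rmult; [apply continuous_sin2PI | now apply continuous_poisson]. }
  assert (Hmass : (1 + (u ^ 2 + v ^ 2)) * 1 + (-2 * u) * C + (-2 * v) * S = 1 - (u ^ 2 + v ^ 2)).
  { refine (is_RInt_R_unique _ 0 1 _ _
              (is_RInt_lincomb3 _ _ _ _ _ _ _ _ _ _ _ (is_RInt_poisson u v He) HC HS) _).
    refine (is_RInt_congr _ _ _ _ _ _ _ _ (is_RInt_const 0 1 (1 - (u ^ 2 + v ^ 2)))).
    - intros x; pose proof (poisson_denom_pos u v x He); unfold poisson, trigpoly in *.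
      field; lra.
    - unfold scal; simpl; unfold mult; simpl; ring. }
  assert (Hcross : u * S - v * C = 0).
  { refine (is_RInt_R_unique _ 0 1 _ _
              (is_RInt_Rminus _ _ _ _ _ _ (is_RInt_Rscal u _ _ _ _ HS)
                 (is_RInt_Rscal v _ _ _ _ HC)) _).
    refine (is_RInt_congr _ _ _ _ _ _ _ _ (is_RInt_poisson_cross u v He));
      [intros x; ring | reflexivity]. }
  destruct (Req_dec (u ^ 2 + v ^ 2) 0) as [He0 | He0].
  - assert (u = 0) by nra; assert (v = 0) by nra; subst u v.
    split; [refine (is_RInt_congr _ _ _ _ _ _ _ _ is_RInt_cos2PI)
           | refine (is_RInt_congr _ _ _ _ _ _ _ _ is_RInt_sin2PI)];
      solve [intros x; rewrite poisson_00; ring | reflexivity].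
  - assert (Hdot : u * C + v * S - (u ^ 2 + v ^ 2) = 0) by lra.
    assert (HCu : (u ^ 2 + v ^ 2) * (C - u) = 0).
    { transitivity (u * (u * C + v * S - (u ^ 2 + v ^ 2)) - v * (u * S - v * C)); [ring |].
      rewrite Hdot, Hcross; ring. }
    assert (HSv : (u ^ 2 + v ^ 2) * (S - v) = 0).
    { transitivity (v * (u * C + v * S - (u ^ 2 + v ^ 2)) + u * (u * S - v * C)); [ring |].
      rewrite Hdot, Hcross; ring. }
    apply Rmult_integral in HCu; apply Rmult_integral in HSv.
    split; [refine (is_RInt_congr _ _ _ _ _ _ (fun _ => eq_refl) _ HC)
           | refine (is_RInt_congr _ _ _ _ _ _ (fun _ => eq_refl) _ HS)]; lra.
Qed.

Lemma solves_P_moments (j p0 p1 q1 H : R) (V m : R -> R) :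
  solves_P 1 j V (trigpoly p0 p1 q1) m H ->
  exists C S : R,
    is_RInt (fun y => cos (2 * PI * y) * m y) 0 1 C /\
    is_RInt (fun y => sin (2 * PI * y) * m y) 0 1 S /\
    forall x, j ^ 2 / (2 * m x) = trigpoly p0 (p1 * C - q1 * S) (q1 * C + p1 * S) x + H - V x.
Proof.
  intros [[Hc _] [Hpos [Hint Heq]]]; rewrite int_T_eqE in Hint.
  assert (Hcm : forall x, continuous m x) by (intros x; apply continuity_pt_filterlim, Hc).
  destruct (ex_RInt_R_continuous (fun y => cos (2 * PI * y) * m y) 0 1) as [C HC].
  { intros x; apply continuous_Rmult; auto; apply continuous_cos2PI. }
  destruct (ex_RInt_R_continuous (fun y => sin (2 * PI * y) * m y) 0 1) as [S HS].
  { intros x; apply continuous_Rmult; auto; apply continuous_sin2PI. }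
  exists C, S; split; [| split]; auto.
  intros x; specialize (Heq x); rewrite int_T_eqE, Rpower_1 in Heq by auto.
  pose proof (is_RInt_R_unique _ _ _ _ _ Heq
                (is_RInt_trigpoly_conv p0 p1 q1 x _ _ _ _ Hint HC HS)).
  unfold trigpoly in *; lra.
Qed.

Lemma solves_P_of_moments (j p0 p1 q1 H C S : R) (V m : R -> R) :
  continuity m -> periodic1 m -> (forall x, 0 < m x) -> is_RInt m 0 1 1 ->
  is_RInt (fun y => cos (2 * PI * y) * m y) 0 1 C ->
  is_RInt (fun y => sin (2 * PI * y) * m y) 0 1 S ->
  (forall x, j ^ 2 / (2 * m x) = trigpoly p0 (p1 * C - q1 * S) (q1 * C + p1 * S) x + H - V x) ->
  solves_P 1 j V (trigpoly p0 p1 q1) m H.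
Proof.
  intros Hc Hper Hpos Hint HC HS Heq.
  split; [split; auto |]; split; auto; split; [now apply int_T_eqE |].
  intros x; apply int_T_eqE.
  refine (is_RInt_congr _ _ _ _ _ _ (fun _ => eq_refl) _
            (is_RInt_trigpoly_conv p0 p1 q1 x _ _ _ _ Hint HC HS)).
  rewrite Rpower_1, Heq by auto; unfold trigpoly; ring.
Qed.

(* Monotonicity argument: if 1/m' - 1/m is the trigonometric polynomial below, testing it against
   m' - m gives int (m' - m)^2 / (m m') = - k p1 ((C' - C)^2 + (S' - S)^2) <= 0, the q1 terms
   cancelling. *)
Section Monotonicity.

Variables (m m' : R -> R) (p1 q1 k h C S C' S' : R).
Hypotheses (Hp1 : 0 <= p1) (Hk : 0 < k)
  (Hpos : forall x, 0 < m x) (Hpos' : forall x, 0 < m' x)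
  (Hcm : forall x, continuous m x) (Hcm' : forall x, continuous m' x)
  (Hint : is_RInt m 0 1 1) (Hint' : is_RInt m' 0 1 1)
  (HC : is_RInt (fun y => cos (2 * PI * y) * m y) 0 1 C)
  (HS : is_RInt (fun y => sin (2 * PI * y) * m y) 0 1 S)
  (HC' : is_RInt (fun y => cos (2 * PI * y) * m' y) 0 1 C')
  (HS' : is_RInt (fun y => sin (2 * PI * y) * m' y) 0 1 S')
  (Hinv : forall x, / m' x - / m x =
            k * trigpoly h (p1 * (C' - C) - q1 * (S' - S)) (q1 * (C' - C) + p1 * (S' - S)) x).

Let d (y : R) : R := m' y - m y.
Let w (y : R) : R := m y * m' y.

Let w_pos (x : R) : 0 < w x.
Proof. apply Rmult_lt_0_compat; auto. Qed.

Let d_eq (x : R) : d x = - w x * (/ m' x - / m x).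
Proof. pose proof (Hpos x); pose proof (Hpos' x); unfold d, w; field; lra. Qed.

Let is_RInt_d : is_RInt d 0 1 0.
Proof.
  refine (is_RInt_congr _ _ _ _ _ _ (fun _ => eq_refl) _ (is_RInt_Rminus _ _ _ _ _ _ Hint' Hint)).
  ring.
Qed.

Let is_RInt_cos_d : is_RInt (fun y => cos (2 * PI * y) * d y) 0 1 (C' - C).
Proof.
  refine (is_RInt_congr _ _ _ _ _ _ _ eq_refl (is_RInt_Rminus _ _ _ _ _ _ HC' HC)).
  intros y; unfold d; ring.
Qed.

Let is_RInt_sin_d : is_RInt (fun y => sin (2 * PI * y) * d y) 0 1 (S' - S).
Proof.
  refine (is_RInt_congr _ _ _ _ _ _ _ eq_refl (is_RInt_Rminus _ _ _ _ _ _ HS' HS)).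
  intros y; unfold d; ring.
Qed.

Let energy_vanishes : is_RInt (fun y => d y ^ 2 / w y) 0 1 0.
Proof.
  apply (is_RInt_ge0_le0_eq0 _ 0 1 (- k * (p1 * ((C' - C) ^ 2 + (S' - S) ^ 2)))).
  - lra.
  - intros x; apply Rdiv_le_0_compat; [apply pow2_ge_0 | apply w_pos].
  - refine (is_RInt_congr _ _ _ _ _ _ _ _ (is_RInt_lincomb3 _ _ _ _ _ _ _ _
              (- k * h) (- k * (p1 * (C' - C) - q1 * (S' - S)))
              (- k * (q1 * (C' - C) + p1 * (S' - S))) is_RInt_d is_RInt_cos_d is_RInt_sin_d)).
    + intros y; pose proof (Hpos y); pose proof (Hpos' y).
      replace (d y ^ 2 / w y) with (- d y * (/ m' y - / m y)) by (unfold d, w; field; lra).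
      rewrite Hinv; unfold trigpoly; ring.
    + ring.
  - pose proof (pow2_ge_0 (C' - C)); pose proof (pow2_ge_0 (S' - S)).
    assert (0 <= p1 * ((C' - C) ^ 2 + (S' - S) ^ 2)) by nra.
    nra.
Qed.

Let orthogonal_d (phi : R -> R) (T : R) :
  (forall x, continuous phi x) -> is_RInt (fun y => phi y * d y) 0 1 T -> T = 0.
Proof.
  intros Hphi HT.
  destruct (ex_RInt_R_continuous (fun y => phi y ^ 2 * w y) 0 1) as [B HB].
  { intros x; apply continuous_Rmult; [| apply continuous_Rmult; auto].
    apply (continuous_ext (fun y => phi y * (phi y * 1))); [intros; simpl; ring |].
    apply continuous_Rmult, continuous_Rmult; auto; apply continuous_const. }
  exact (energy0_orthogonal d w phi 0 1 T B ltac:(lra) w_pos energy_vanishes HT HB).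
Qed.

Let moments_eq : C' = C /\ S' = S.
Proof.
  pose proof (orthogonal_d _ _ continuous_cos2PI is_RInt_cos_d).
  pose proof (orthogonal_d _ _ continuous_sin2PI is_RInt_sin_d).
  split; lra.
Qed.

Lemma monotone_trig_diff_eq0 : C' = C /\ S' = S /\ h = 0.
Proof.
  destruct moments_eq as [EC ES]; do 2 (split; auto).
  assert (Hkh : - k * h = 0).
  { apply (is_RInt_scal_pos_eq0 _ w 0 1); [lra | exact w_pos | |].
    - intros x; apply continuous_Rmult; auto.
    - refine (is_RInt_congr _ _ _ _ _ _ _ eq_refl is_RInt_d).
      intros y; rewrite d_eq, Hinv, EC, ES; unfold trigpoly; ring. }
  apply Rmult_integral in Hkh; destruct Hkh; lra.
Qed.

End Monotonicity.

Lemma solves_P_unique (j p0 p1 q1 H H' : R) (V m m' : R -> R) :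
  j <> 0 -> 0 <= p1 ->
  solves_P 1 j V (trigpoly p0 p1 q1) m H -> solves_P 1 j V (trigpoly p0 p1 q1) m' H' ->
  (forall x, m' x = m x) /\ H' = H.
Proof.
  intros Hj Hp1 Hs Hs'.
  destruct (solves_P_moments _ _ _ _ _ _ _ Hs) as (C & S & HC & HS & Heq).
  destruct (solves_P_moments _ _ _ _ _ _ _ Hs') as (C' & S' & HC' & HS' & Heq').
  destruct Hs as [[Hc _] [Hpos [Hint _]]], Hs' as [[Hc' _] [Hpos' [Hint' _]]].
  rewrite int_T_eqE in Hint, Hint'.
  assert (Hk : 0 < 2 / j ^ 2) by (apply Rdiv_lt_0_compat, pow2_gt_0; lra).
  assert (Hcm : forall x, continuous m x) by (intros x; apply continuity_pt_filterlim, Hc).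
  assert (Hcm' : forall x, continuous m' x) by (intros x; apply continuity_pt_filterlim, Hc').
  assert (Hinv : forall x, / m' x - / m x = 2 / j ^ 2 * trigpoly (H' - H)
                   (p1 * (C' - C) - q1 * (S' - S)) (q1 * (C' - C) + p1 * (S' - S)) x).
  { intros x; pose proof (Hpos x); pose proof (Hpos' x).
    replace (/ m' x - / m x) with (2 / j ^ 2 * (j ^ 2 / (2 * m' x) - j ^ 2 / (2 * m x)))
      by (field; repeat split; lra).
    rewrite Heq, Heq'; unfold trigpoly; ring. }
  destruct (monotone_trig_diff_eq0 m m' p1 q1 _ _ C S C' S' Hp1 Hk Hpos Hpos' Hcm Hcm'
              Hint Hint' HC HS HC' HS' Hinv) as (EC & ES & EH).
  split; [| lra].
  intros x; apply Rinv_eq_reg.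
  specialize (Hinv x); rewrite EC, ES, EH in Hinv; unfold trigpoly in Hinv; lra.
Qed.

Lemma r_equation_strict_mono (J p1 q1 a b : R) : 0 < J -> 0 <= p1 -> 1 <= a -> a < b ->
  (1 - 1 / a) * ((p1 + J * a) ^ 2 + q1 ^ 2) < (1 - 1 / b) * ((p1 + J * b) ^ 2 + q1 ^ 2).
Proof.
  intros HJ Hp Ha Hab.
  assert (HJa : 0 < J * a) by (apply Rmult_lt_0_compat; lra).
  assert (HJab : J * a < J * b) by (apply Rmult_lt_compat_l; lra).
  assert (Hsq : (p1 + J * a) ^ 2 < (p1 + J * b) ^ 2) by nra.
  assert (Hia : 1 / b < 1 / a) by (apply Rmult_lt_compat_l, Rinv_lt_contravar; nra).
  assert (Hib : 1 / a <= 1)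
    by (unfold Rdiv; rewrite Rmult_1_l, <- Rinv_1; apply Rinv_le_contravar; lra).
  apply Rle_lt_trans with ((1 - 1 / b) * ((p1 + J * a) ^ 2 + q1 ^ 2)).
  - pose proof (pow2_ge_0 (p1 + J * a)); pose proof (pow2_ge_0 q1).
    apply Rmult_le_compat_r; lra.
  - apply Rmult_lt_compat_l; lra.
Qed.

(* f changes sign on [1, r1]: at r1 = 1 + K / J^2 the term (r - 1) (J r)^2 alone exceeds r K. *)
Lemma r_equation_exists_unique (J p1 q1 K : R) : 0 < J -> 0 <= p1 -> 0 <= K ->
  exists! r, 1 <= r /\ (1 - 1 / r) * ((p1 + J * r) ^ 2 + q1 ^ 2) = K.
Proof.
  intros HJ Hp HK.
  set (f := fun r => (r - 1) * ((p1 + J * r) ^ 2 + q1 ^ 2) - r * K).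
  set (r1 := 1 + K / (J * J)).
  assert (HK1 : 0 <= K / (J * J)) by (apply Rdiv_le_0_compat; nra).
  assert (Hf1 : f r1 >= 0).
  { unfold f; replace (r1 - 1) with (K / (J * J)) by (unfold r1; ring).
    assert (Hr1 : 0 <= J * r1) by (apply Rmult_le_pos; unfold r1; lra).
    assert (Hgrow : (J * r1) ^ 2 <= (p1 + J * r1) ^ 2 + q1 ^ 2)
      by (pose proof (pow2_ge_0 q1); nra).
    assert (HKr : K / (J * J) * (J * r1) ^ 2 = K * r1 * r1) by (field; lra).
    assert (0 <= K * r1 * r1 - r1 * K).
    { replace (K * r1 * r1 - r1 * K) with (K * r1 * (r1 - 1)) by ring.
      apply Rmult_le_pos; [apply Rmult_le_pos |]; unfold r1; lra. }
    assert (K / (J * J) * (J * r1) ^ 2 <= K / (J * J) * ((p1 + J * r1) ^ 2 + q1 ^ 2))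
      by (apply Rmult_le_compat_l; lra).
    lra. }
  assert (Hcf : continuity f) by (unfold f; reg).
  assert (H1r1 : 1 <= r1) by (unfold r1; lra).
  assert (Hf0 : f 1 = - K) by (unfold f; ring).
  destruct (IVT_cor f 1 r1 Hcf H1r1) as [r [Hr Hfr]]; [rewrite Hf0; nra |].
  assert (Er : (1 - 1 / r) * ((p1 + J * r) ^ 2 + q1 ^ 2) = K).
  { apply (Rmult_eq_reg_l r); [| lra].
    unfold f in Hfr; field_simplify; lra. }
  exists r; split; [split; [lra | exact Er] |].
  intros r' [Hr' Er'].
  destruct (Rtotal_order r r') as [Hlt | [Heq | Hgt]]; auto.
  - pose proof (r_equation_strict_mono J p1 q1 r r' HJ Hp ltac:(lra) Hlt); lra.
  - pose proof (r_equation_strict_mono J p1 q1 r' r HJ Hp Hr' Hgt); lra.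
Qed.

(* m is a multiple of the Poisson kernel at (u, v), whose moments are (u, v); the equation for r
   is |(v1, w1)|^2 = |(u, v)|^2 ((p1 + j^2 r)^2 + q1^2) with |(u, v)|^2 = 1 - 1/r. *)
Lemma solves_P_inv_trigpoly (j p0 p1 q1 v0 v1 w1 r : R) :
  j <> 0 -> 0 <= p1 -> 1 <= r ->
  (1 - 1 / r) * ((p1 + j ^ 2 * r) ^ 2 + q1 ^ 2) = v1 ^ 2 + w1 ^ 2 ->
  let P := p1 + j ^ 2 * r in
  let D := P ^ 2 + q1 ^ 2 in
  solves_P 1 j (trigpoly v0 v1 w1) (trigpoly p0 p1 q1)
    (fun x => 1 / trigpoly (2 * r - 1) (- (2 * r * (v1 * P + w1 * q1)) / D)
                          (- (2 * r * (w1 * P - v1 * q1)) / D) x)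
    (j ^ 2 * (2 * r - 1) / 2 + v0 - p0).
Proof.
  intros Hj Hp1 Hr HE P D.
  assert (Hj2 : 0 < j ^ 2) by (apply pow2_gt_0; auto).
  assert (HP : 0 < P) by (unfold P; nra).
  assert (HD : 0 < D) by (pose proof (pow2_ge_0 q1); unfold D; nra).
  set (u := (v1 * P + w1 * q1) / D); set (v := (w1 * P - v1 * q1) / D).
  assert (He : u ^ 2 + v ^ 2 = 1 - 1 / r).
  { transitivity ((v1 ^ 2 + w1 ^ 2) / D); [unfold u, v, D; field; fold D; lra |].
    rewrite <- HE; fold P D; field; lra. }
  assert (Hlt : u ^ 2 + v ^ 2 < 1)
    by (rewrite He; assert (0 < 1 / r) by (apply Rdiv_lt_0_compat; lra); lra).
  replace (- (2 * r * (v1 * P + w1 * q1)) / D) with (-2 * r * u) by (unfold u; field; lra).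
  replace (- (2 * r * (w1 * P - v1 * q1)) / D) with (-2 * r * v) by (unfold v; field; lra).
  assert (Hscale : forall x, trigpoly (2 * r - 1) (-2 * r * u) (-2 * r * v) x
                            = r * trigpoly (1 + (u ^ 2 + v ^ 2)) (-2 * u) (-2 * v) x).
  { intros x; rewrite <- trigpoly_scale, He; f_equal; field; lra. }
  assert (Hden : forall x, 0 < trigpoly (2 * r - 1) (-2 * r * u) (-2 * r * v) x).
  { intros x; rewrite Hscale; apply Rmult_lt_0_compat; [lra | now apply poisson_denom_pos]. }
  set (m := fun x => 1 / trigpoly (2 * r - 1) (-2 * r * u) (-2 * r * v) x).
  assert (Hm : forall x, m x = poisson u v x).
  { intros x; pose proof (poisson_denom_pos u v x Hlt); unfold m, poisson.
    rewrite Hscale, He in *; field; split; lra. }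
  destruct (is_RInt_poisson_moments u v Hlt) as [HC HS].
  apply (solves_P_of_moments _ _ _ _ _ u v).
  - intros x; apply continuity_pt_filterlim.
    apply (continuous_ext (poisson u v)); [intros y; now rewrite Hm | now apply continuous_poisson].
  - intros x; unfold m; now rewrite trigpoly_periodic.
  - intros x; rewrite Hm; apply Rdiv_lt_0_compat; [lra | now apply poisson_denom_pos].
  - exact (is_RInt_congr _ _ _ _ _ _ (fun y => eq_sym (Hm y)) eq_refl (is_RInt_poisson u v Hlt)).
  - refine (is_RInt_congr _ _ _ _ _ _ _ eq_refl HC); intros y; now rewrite Hm.
  - refine (is_RInt_congr _ _ _ _ _ _ _ eq_refl HS); intros y; now rewrite Hm.
  - intros x; pose proof (Hden x); unfold m.
    assert (Hv1 : v1 = P * u - q1 * v) by (unfold u, v, D in *; field; lra).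
    assert (Hw1 : w1 = q1 * u + P * v) by (unfold u, v, D in *; field; lra).
    rewrite Hv1, Hw1; unfold P, trigpoly in *; field; lra.
Qed.

Theorem theorem1p3 (j p0 p1 q1 v0 v1 w1 : R) :
  j <> 0 -> 0 < p0 -> 0 <= p1 ->
  let G := fun x => p0 + p1 * cos (2 * PI * x) + q1 * sin (2 * PI * x) in
  let V := fun x => v0 + v1 * cos (2 * PI * x) + w1 * sin (2 * PI * x) in
  let E := fun r => (1 - 1 / r) * ((p1 + j ^ 2 * r) ^ 2 + q1 ^ 2) = v1 ^ 2 + w1 ^ 2 in
  (exists! r, 1 <= r /\ E r) /\
  (forall r, 1 <= r -> E r ->
     let D := (p1 + j ^ 2 * r) ^ 2 + q1 ^ 2 in
     let a0 := 2 * r - 1 in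
     let Hbar := j ^ 2 * (2 * r - 1) / 2 + v0 - p0 in
     let a1 := - (2 * r * (v1 * (p1 + j ^ 2 * r) + w1 * q1)) / D in
     let b1 := - (2 * r * (w1 * (p1 + j ^ 2 * r) - v1 * q1)) / D in
     let m := fun x => 1 / (a0 + a1 * cos (2 * PI * x) + b1 * sin (2 * PI * x)) in
     solves_P 1 j V G m Hbar /\
     (forall (m' : R -> R) (H' : R), solves_P 1 j V G m' H' ->
        (forall x, m' x = m x) /\ H' = Hbar)).
Proof.
  intros Hj _ Hp1 G V E; split.
  - apply (r_equation_exists_unique (j ^ 2)); auto.
    + now apply pow2_gt_0.
    + pose proof (pow2_ge_0 v1); pose proof (pow2_ge_0 w1); lra.
  - intros r Hr HE D a0 Hbar a1 b1 m.
    assert (Hs : solves_P 1 j V G m Hbar)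
      by exact (solves_P_inv_trigpoly j p0 p1 q1 v0 v1 w1 r Hj Hp1 Hr HE).
    split; [exact Hs |].
    intros m' H' Hs'; exact (solves_P_unique j p0 p1 q1 Hbar H' V m m' Hj Hp1 Hs Hs').
Qed.
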